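(* Let $c_1,c_2\ge 2$ be integers, let $d$ be prime, and let $f:\mathbb{Z}_{c_1}\times\mathbb{Z}_{c_2}\to\mathbb{Z}_d$ be a function that cannot be written as $f(s_1,s_2)=g_1(s_1)+g_2(s_2)$ (mod $d$) for any functions $g_1:\mathbb{Z}_{c_1}\to\mathbb{Z}_d$, $g_2:\mathbb{Z}_{c_2}\to\mathbb{Z}_d$. Then the only non-signaling distribution $p(m_1,m_2|s_1,s_2)$ on $\mathbb{Z}_d^2$ satisfying $p(m_1+m_2\equiv f(s_1,s_2)\,|\,s_1,s_2)=1$ for all $(s_1,s_2)$ is $$p(m_1,m_2|s_1,s_2)=\begin{cases}d^{-1}&\text{if } m_1+m_2\equiv f(s_1,s_2)\pmod d,\\0&\text{otherwise.}\end{cases}$$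
   Context: A bipartite conditional distribution $p(m_1,m_2|s_1,s_2)$ with $m_1,m_2\in\mathbb{Z}_d$ and $s_j\in\mathbb{Z}_{c_j}$ is non-signaling if the marginal $\sum_{m_2}p(m_1,m_2|s_1,s_2)$ does not depend on $s_2$ and the marginal $\sum_{m_1}p(m_1,m_2|s_1,s_2)$ does not depend on $s_1$. *)

From HB Require Import structures.
From mathcomp Require Import all_boot all_order all_algebra.
Set Implicit Arguments. Unset Strict Implicit. Unset Printing Implicit Defensive.
Import Order.TTheory GRing.Theory Num.Theory.
Local Open Scope ring_scope.

Definition cond_distr (R : realFieldType) (d c1 c2 : nat)
  (p : 'Z_d -> 'Z_d -> 'I_c1 -> 'I_c2 -> R) : Prop :=
  (forall m1 m2 s1 s2, 0 <= p m1 m2 s1 s2) /\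
  (forall s1 s2, \sum_(m1 : 'Z_d) \sum_(m2 : 'Z_d) p m1 m2 s1 s2 = 1).

Definition non_signaling (R : realFieldType) (d c1 c2 : nat)
  (p : 'Z_d -> 'Z_d -> 'I_c1 -> 'I_c2 -> R) : Prop :=
  (forall m1 s1 s2 s2',
     \sum_(m2 : 'Z_d) p m1 m2 s1 s2 = \sum_(m2 : 'Z_d) p m1 m2 s1 s2') /\
  (forall m2 s1 s1' s2,
     \sum_(m1 : 'Z_d) p m1 m2 s1 s2 = \sum_(m1 : 'Z_d) p m1 m2 s1' s2).

From HB Require Import structures.
From mathcomp Require Import all_boot all_order all_algebra.
From mathcomp Require Import ring.
Set Implicit Arguments. Unset Strict Implicit. Unset Printing Implicit Defensive.
Import Order.TTheory GRing.Theory Num.Theory.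
Local Open Scope ring_scope.

(* The constraint p(m1 + m2 = f(s1,s2) | s1,s2) = 1 forces p to
   vanish off the line m1 + m2 = f(s1,s2), so Alice's marginal is
   a(x | s1,s2) = p(x, f(s1,s2) - x | s1,s2) and Bob's is
   b(y | s1,s2) = p(f(s1,s2) - y, y | s1,s2).  Reading the same entry of p
   through both marginals and using that b does not depend on s1 gives the
   shift law  a(x | s1,s2) = a(x + f(s1',s2) - f(s1,s2) | s1',s2).  Since a
   does not depend on s2 either, composing two shift laws shows that
   a(. | s1',s2) is invariant under translation by the mixed difference
   (f(s1,s2) - f(s1',s2)) - (f(s1,s2') - f(s1',s2')), which is non-zero for
   some choice of settings exactly because f is not additive.  In Z_d with d
   prime a non-zero translation generates the whole group, so that marginal
   is constant, hence uniform (= 1/d); the shift law transports uniformity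
   to every setting, and on the line p equals Alice's marginal. *)

Lemma additive_of_const_mixed_diff (I1 I2 : Type) (V : zmodType)
    (z1 : I1) (z2 : I2) (f : I1 -> I2 -> V) :
  (forall s1 s1' s2 s2', f s1 s2 - f s1' s2 = f s1 s2' - f s1' s2') ->
  exists (g1 : I1 -> V) (g2 : I2 -> V), forall s1 s2, f s1 s2 = g1 s1 + g2 s2.
Proof.
move=> mixed0; exists (fun s1 => f s1 z2 - f z1 z2), (f z1) => s1 s2.
by have /eqP := mixed0 s1 z1 s2 z2; rewrite subr_eq => /eqP.
Qed.

Lemma mixed_diff_witness (I1 I2 : finType) (V : zmodType)
    (z1 : I1) (z2 : I2) (f : I1 -> I2 -> V) :
  ~ (exists (g1 : I1 -> V) (g2 : I2 -> V),
       forall s1 s2, f s1 s2 = g1 s1 + g2 s2) ->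
  exists s1 s1' s2 s2', f s1 s2 - f s1' s2 != f s1 s2' - f s1' s2'.
Proof.
move=> not_additive.
pose mixed_neq (s : I1 * I1 * I2 * I2) :=
  let: (s1, s1', s2, s2') := s in f s1 s2 - f s1' s2 != f s1 s2' - f s1' s2'.
have [[[[s1 s1'] s2] s2'] neq | all_eq] := pickP mixed_neq.
  by exists s1, s1', s2, s2'.
exfalso; apply: not_additive; apply: (additive_of_const_mixed_diff z1 z2).
by move=> s1 s1' s2 s2'; apply/eqP/negbFE/(all_eq (s1, s1', s2, s2')).
Qed.

(* For d prime, a function on Z_d invariant under a non-zero translation is
   constant, because the translation generates Z_d. *)
Lemma translation_invariant_const (d : nat) (T : Type) (a : 'Z_d -> T)
    (v : 'Z_d) :
  prime d -> v != 0 -> (forall y, a (y + v) = a y) -> forall y, a y = a 0.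
Proof.
move=> d_prime v_neq0 a_inv.
have iter_inv k : a (v *+ k) = a 0.
  by elim: k => [|k IHk]; rewrite ?mulr0n // mulrS addrC a_inv.
have d_gt1 := prime_gt1 d_prime.
have v_unit : v \is a GRing.unit.
  rewrite -(natr_Zp v) unitZpE // prime_coprime // gtnNdvd //.
    by rewrite lt0n; apply: contra v_neq0 => /eqP v0; apply/eqP/val_inj.
  by rewrite -[X in (_ < X)%N](Zp_cast d_gt1) ltn_ord.
move=> y; have -> : y = v *+ (v^-1 * y)%R by rewrite -mulr_natr natr_Zp mulVKr.
exact: iter_inv.
Qed.

Lemma const_distr_uniform (R : numFieldType) (I : finType) (F : I -> R)
    (i0 : I) :
  (forall i, F i = F i0) -> \sum_i F i = 1 -> forall i, F i = (#|I|%:R)^-1.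
Proof.
move=> F_const F_sum1 i.
have card_neq0 : (#|I|%:R : R) != 0.
  by rewrite pnatr_eq0 -lt0n; apply/card_gt0P; exists i0.
have sum_const : \sum_j F j = F i0 * #|I|%:R.
  by rewrite (eq_bigr _ (fun j _ => F_const j)) sumr_const mulr_natr.
by rewrite F_const; apply: (mulIf card_neq0); rewrite -sum_const F_sum1 mulVf.
Qed.

Lemma psum2_compl_eq0 (R : numDomainType) (I J : finType) (F : I -> J -> R)
    (P : I -> J -> bool) :
  (forall i j, 0 <= F i j) ->
  \sum_i \sum_j F i j = \sum_i \sum_(j | P i j) F i j ->
  forall i j, ~~ P i j -> F i j = 0.
Proof.
move=> F_ge0 sumP i j notP.
have rest0 : \sum_i \sum_(j | ~~ P i j) F i j = 0.
  move: sumP; under eq_bigr => i' _ do rewrite (bigID (P i')) /=.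
  by rewrite big_split /= => /(canRL (addKr _)) ->; rewrite addNr.
have row0 : \sum_(j | ~~ P i j) F i j = 0.
  by apply: (psumr_eq0P _ rest0) => // i' _; apply: sumr_ge0.
exact: (psumr_eq0P _ row0).
Qed.

Lemma sum_on_line (R : nmodType) (d : nat) (F : 'Z_d -> R) (x c : 'Z_d) :
  (forall y, x + y != c -> F y = 0) -> \sum_y F y = F (c - x).
Proof.
move=> F_off; rewrite (bigD1 (c - x)) //= big1 ?addr0 // => y y_neq.
by apply: F_off; apply: contra y_neq => /eqP <-; apply/eqP; ring.
Qed.

Section LineDistribution.

Variables (R : realFieldType) (d c1 c2 : nat) (f : 'I_c1 -> 'I_c2 -> 'Z_d).
Variable p : 'Z_d -> 'Z_d -> 'I_c1 -> 'I_c2 -> R.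

Hypothesis p_off_line :
  forall m1 m2 s1 s2, m1 + m2 != f s1 s2 -> p m1 m2 s1 s2 = 0.
Hypothesis p_ns : non_signaling p.

Definition marginal1 (m1 : 'Z_d) s1 s2 : R := \sum_m2 p m1 m2 s1 s2.

Lemma marginal1_on_line x s1 s2 : marginal1 x s1 s2 = p x (f s1 s2 - x) s1 s2.
Proof. by apply: sum_on_line => y; apply: p_off_line. Qed.

Lemma marginal1_indep s2' x s1 s2 : marginal1 x s1 s2 = marginal1 x s1 s2'.
Proof. exact: p_ns.1. Qed.

Lemma marginal1_shift s1' x s1 s2 :
  marginal1 x s1 s2 = marginal1 (x + (f s1' s2 - f s1 s2)) s1' s2.
Proof.
have bob_on_line y t1 : \sum_m1 p m1 y t1 s2 = p (f t1 s2 - y) y t1 s2.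
  apply: (@sum_on_line _ _ (fun m1 => p m1 y t1 s2) y) => m1 m1y.
  by apply: p_off_line; rewrite addrC.
have := bob_on_line (f s1 s2 - x) s1; rewrite (p_ns.2 _ s1 s1') bob_on_line.
rewrite !marginal1_on_line (_ : f s1 s2 - (f s1 s2 - x) = x); last by ring.
by move=> <-; congr p; ring.
Qed.

(* Composing two shift laws through another setting s1 shows that Alice's
   marginal at s1' is invariant under translation by a mixed difference. *)
Lemma marginal1_periodic s1 s1' s2 s2' y :
  marginal1 (y + ((f s1 s2' - f s1' s2') - (f s1 s2 - f s1' s2))) s1' s2 =
  marginal1 y s1' s2.
Proof.
rewrite (marginal1_shift s1) (marginal1_indep s2') (marginal1_shift s1').
rewrite (marginal1_indep s2 _ s1' s2'); congr marginal1; ring.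
Qed.

End LineDistribution.

Theorem lemma1 (R : realFieldType) (c1 c2 d : nat)
  (hc1 : (2 <= c1)%N) (hc2 : (2 <= c2)%N) (hd : prime d)
  (f : 'I_c1 -> 'I_c2 -> 'Z_d)
  (hf : ~ exists (g1 : 'I_c1 -> 'Z_d) (g2 : 'I_c2 -> 'Z_d),
          forall s1 s2, f s1 s2 = g1 s1 + g2 s2)
  (p : 'Z_d -> 'Z_d -> 'I_c1 -> 'I_c2 -> R)
  (hp : cond_distr p) (hns : non_signaling p)
  (hsum : forall s1 s2,
     \sum_(m1 : 'Z_d) \sum_(m2 : 'Z_d | m1 + m2 == f s1 s2) p m1 m2 s1 s2 = 1) :
  forall m1 m2 s1 s2,
    p m1 m2 s1 s2 = (if m1 + m2 == f s1 s2 then (d%:R)^-1 else 0).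
Proof.
case: hp => p_ge0 p_sum1.
have off_line m1 m2 s1 s2 : m1 + m2 != f s1 s2 -> p m1 m2 s1 s2 = 0.
  apply: (psum2_compl_eq0 (F := fun m1 m2 => p m1 m2 s1 s2)
                          (P := fun m1 m2 => m1 + m2 == f s1 s2)) => //.
  by rewrite p_sum1 hsum.
have z1 : 'I_c1 by exists 0%N; apply: leq_trans hc1.
have z2 : 'I_c2 by exists 0%N; apply: leq_trans hc2.
have [s1 [s1' [s2 [s2' mixed_neq]]]] := mixed_diff_witness z1 z2 hf.
have uniform y : marginal1 p y s1' s2 = (d%:R)^-1.
  have -> : (d%:R : R) = #|'Z_d|%:R by rewrite card_ord Zp_cast // prime_gt1.
  apply: (const_distr_uniform (F := fun x => marginal1 p x s1' s2) (i0 := 0));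
    last exact: p_sum1.
  apply: translation_invariant_const hd _
           (marginal1_periodic off_line hns s1 s1' s2 s2').
  by rewrite subr_eq0 eq_sym.
move=> m1 m2 t1 t2; case: eqP => [on_line | /eqP]; last exact: off_line.
have -> : m2 = f t1 t2 - m1 by rewrite -on_line; ring.
rewrite -(marginal1_on_line off_line) (marginal1_shift off_line hns s1').
by rewrite (marginal1_indep hns s2) uniform.
Qed.
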